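(* Let $\alpha$ be a set and $\odot:\alpha\times\alpha\to\alpha$. Calls $\mathrm{treeReduce}(\odot,\mathit{rdd})$ have deterministic outcomes if and only if calls $\mathrm{reduce}(\odot,\mathit{rdd})$ have deterministic outcomes.
   Context: Lists are finite; $\mathbin{+\!\!+}$ is concatenation. $\mathrm{foldl}(f,b,[\,])=b$, $\mathrm{foldl}(f,b,[x_1,\dots,x_n])=f(\cdots f(f(b,x_1),x_2)\cdots,x_n)$; $\mathrm{reducel}(f,[x_1,\dots,x_n])=\mathrm{foldl}(f,x_1,[x_2,\dots,x_n])$ for nonempty lists. An RDD is a list of lists. A partitioning is a function $P$ sending each nonempty list $L$ to an RDD obtained by splitting $L$ into consecutive nonempty pieces $p_1,\dots,p_n$ with $p_1\mathbin{+\!\!+}\cdots\mathbin{+\!\!+}p_n=L$ and then arbitrarily permuting $[p_1,\dots,p_n]$. $\mathrm{reduce}_{\mathrm{det}}(\odot,[q_1,\dots,q_m])=\mathrm{reducel}(\odot,[\mathrm{reducel}(\odot,q_1),\dots,\mathrm{reducel}(\odot,q_m)])$; calls to $\mathrm{reduce}$ have deterministic outcomes if $\mathrm{reduce}_{\mathrm{det}}(\odot,P(L))=\mathrm{reducel}(\odot,L)$ for all nonempty $L$ and all partitionings $P$. An instantiation of $\mathrm{apply}$ is any deterministic procedure which, given $\odot$ and a nonempty list $[r_1,\dots,r_m]$, returns the value obtained by repeatedly replacing two adjacent elements $l',r'$ of the current list by $l'\odot r'$ until one element remains. $\mathrm{treeReduce}_{\mathrm{bt}}(\mathrm{apply},\odot,[q_1,\dots,q_m])=\mathrm{apply}(\odot,[\mathrm{reducel}(\odot,q_1),\dots,\mathrm{reducel}(\odot,q_m)])$.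 Calls $\mathrm{treeReduce}(\odot,\mathit{rdd})$ have deterministic outcomes if $\mathrm{treeReduce}_{\mathrm{bt}}(\mathrm{apply},\odot,P(L))=\mathrm{reducel}(\odot,L)$ for all nonempty lists $L$, partitionings $P$, and instantiations $\mathrm{apply}$. *)

From Stdlib Require Import List Permutation.
Import ListNotations.
Set Implicit Arguments.

Section Defs.
Variable A : Type.

Definition reducel (f : A -> A -> A) (l : list A) : option A :=
  match l with
  | [] => None
  | x :: xs => Some (fold_left f xs x)
  end.

Fixpoint all_some (l : list (option A)) : option (list A) :=
  match l with
  | [] => Some []
  | None :: _ => None
  | Some x :: r =>
      match all_some r with Some r' => Some (x :: r') | None => None end
  end.

Definition is_partitioning (P : list A -> list (list A)) : Prop :=
  forall L : list A, L <> [] ->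
    exists ps : list (list A),
      Forall (fun p => p <> []) ps /\ concat ps = L /\ Permutation ps (P L).

Definition reduce_det (f : A -> A -> A) (rdd : list (list A)) : option A :=
  match all_some (map (reducel f) rdd) with
  | Some rs => reducel f rs
  | None => None
  end.

Definition reduce_deterministic (f : A -> A -> A) : Prop :=
  forall P, is_partitioning P ->
  forall L : list A, L <> [] -> reduce_det f (P L) = reducel f L.

Inductive merges (f : A -> A -> A) : list A -> A -> Prop :=
  | merges_one : forall x, merges f [x] x
  | merges_step : forall l1 l2 x y v,
      merges f (l1 ++ f x y :: l2) v -> merges f (l1 ++ x :: y :: l2) v.

Definition is_apply (apply : (A -> A -> A) -> list A -> option A) : Prop :=
  forall (f : A -> A -> A) (rs : list A), rs <> [] ->
    exists v, apply f rs = Some v /\ merges f rs v.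

Definition treeReduce_bt (apply : (A -> A -> A) -> list A -> option A)
    (f : A -> A -> A) (rdd : list (list A)) : option A :=
  match all_some (map (reducel f) rdd) with
  | Some rs => apply f rs
  | None => None
  end.

Definition treeReduce_deterministic (f : A -> A -> A) : Prop :=
  forall P, is_partitioning P ->
  forall apply, is_apply apply ->
  forall L : list A, L <> [] -> treeReduce_bt apply f (P L) = reducel f L.

End Defs.

(* Taking [apply := reducel] makes tree reduction coincide with [reduce], so
   determinism of [treeReduce] gives that of [reduce]. Conversely, if [reduce]
   is deterministic then [f] is associative: reducing [a; b; c] split as
   [[a]; [b; c]] yields [f a (f b c)], while [reducel] yields [f (f a b) c].
   For an associative operator every order of adjacent merges gives the left
   fold, so every instantiation of [apply] agrees with [reducel]. *)

From Stdlib Require Import List Permutation.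
Import ListNotations.

Section Merges.
Variables (A : Type) (f : A -> A -> A).

Lemma merges_fold_left (x : A) (xs : list A) :
  merges f (x :: xs) (fold_left f xs x).
Proof.
  revert x; induction xs as [|y xs IH]; intros x; simpl.
  - constructor.
  - apply (@merges_step A f [] xs x y), IH.
Qed.

Hypothesis f_assoc : forall a b c, f a (f b c) = f (f a b) c.

Lemma merges_reducel (l : list A) (v : A) :
  merges f l v -> reducel f l = Some v.
Proof.
  induction 1 as [x|l1 l2 x y v _ IH]; [reflexivity|].
  rewrite <- IH. destruct l1 as [|a l1]; simpl; [reflexivity|].
  rewrite !fold_left_app; simpl. rewrite f_assoc. reflexivity.
Qed.

Lemma is_apply_eq_reducel apply (rs : list A) :
  is_apply apply -> rs <> [] -> apply f rs = reducel f rs.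
Proof.
  intros Happ Hrs. destruct (Happ f rs Hrs) as [v [-> Hm]].
  symmetry. apply merges_reducel, Hm.
Qed.

End Merges.

Lemma is_apply_reducel (A : Type) : is_apply (@reducel A).
Proof.
  intros g [|x xs] Hrs; [congruence|].
  exists (fold_left g xs x); split; [reflexivity|].
  apply merges_fold_left.
Qed.

Lemma all_some_map_length (A B : Type) (g : B -> option A) l rs :
  all_some (map g l) = Some rs -> length rs = length l.
Proof.
  revert rs; induction l as [|b l IH]; intros rs H; simpl in H.
  - injection H as <-. reflexivity.
  - destruct (g b); [|discriminate].
    destruct (all_some (map g l)); [|discriminate].
    injection H as <-. simpl. f_equal. apply IH. reflexivity.
Qed.

Lemma partitioning_nonempty (A : Type) (P : list A -> list (list A)) L :
  is_partitioning P -> L <> [] -> P L <> [].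
Proof.
  intros HP HL HPL. destruct (HP L HL) as [ps [_ [Hcat Hperm]]].
  rewrite HPL in Hperm. apply Permutation_sym, Permutation_nil in Hperm. subst ps.
  apply HL. rewrite <- Hcat. reflexivity.
Qed.

Lemma treeReduce_bt_eq_reduce_det (A : Type) (f : A -> A -> A) apply rdd :
  (forall a b c, f a (f b c) = f (f a b) c) ->
  is_apply apply -> rdd <> [] ->
  treeReduce_bt apply f rdd = reduce_det f rdd.
Proof.
  intros f_assoc Happ Hrdd. unfold treeReduce_bt, reduce_det.
  destruct (all_some (map (reducel f) rdd)) as [rs|] eqn:E; [|reflexivity].
  apply is_apply_eq_reducel; [exact f_assoc | exact Happ |].
  apply all_some_map_length in E. intros ->. destruct rdd; [congruence | discriminate].
Qed.

Definition split_head3 {A : Type} (L : list A) : list (list A) :=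
  match L with
  | [x; y; z] => [[x]; [y; z]]
  | _ => [L]
  end.

Lemma is_partitioning_split_head3 (A : Type) : is_partitioning (@split_head3 A).
Proof.
  intros L HL.
  exists (split_head3 L); split; [|split; [|apply Permutation_refl]].
  - destruct L as [|x [|y [|z [|w t]]]]; repeat constructor; congruence.
  - destruct L as [|x [|y [|z [|w t]]]]; simpl; rewrite ?app_nil_r; reflexivity.
Qed.

Lemma reduce_deterministic_assoc (A : Type) (f : A -> A -> A) :
  reduce_deterministic f -> forall a b c, f a (f b c) = f (f a b) c.
Proof.
  intros Hdet a b c.
  assert (E := Hdet _ (is_partitioning_split_head3 A) [a; b; c] ltac:(discriminate)).
  injection E as E. exact E.
Qed.

Theorem proposition2 (A : Type) (f : A -> A -> A) :
  treeReduce_deterministic f <-> reduce_deterministic f.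
Proof.
  split.
  - intros Htree P HP L HL.
    change (treeReduce_bt (@reducel A) f (P L) = reducel f L).
    apply Htree; [exact HP | apply is_apply_reducel | exact HL].
  - intros Hdet P HP apply Happ L HL.
    rewrite treeReduce_bt_eq_reduce_det.
    + apply Hdet; assumption.
    + apply reduce_deterministic_assoc, Hdet.
    + exact Happ.
    + apply partitioning_nonempty; assumption.
Qed.
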